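(* Let $k \geq 2$ be an integer and let $G_1, \dots, G_k$ be finite simple Class 1 graphs with maximum degrees $\Delta(G_1), \dots, \Delta(G_k)$. Let $G = G_1 \square G_2 \square \cdots \square G_k$ and $D = \sum_{i=1}^k \Delta(G_i)$. Suppose $D$ is even and $2\Delta(G_i) < D$ for every $i \in \{1,\dots,k\}$. Suppose that some set $E_0 \subseteq E(G)$ of edges is precolored with colors from a set of at most $D$ colors, such that the distance between any two edges of $E_0$ is at least three. Then this precoloring is extendable, i.e. there is a proper edge coloring of $G$ with $\chi'(G)$ colors in which every edge of $E_0$ receives its prescribed color.
   Context: A graph $G$ is Class 1 if its chromatic index $\chi'(G)$ equals its maximum degree $\Delta(G)$. The Cartesian product $G_1 \square G_2$ has vertex set $V(G_1)\times V(G_2)$, with $(u_1,u_2)$ adjacent to $(v_1,v_2)$ iff either $u_1=v_1$ and $u_2v_2 \in E(G_2)$, or $u_2=v_2$ and $u_1v_1\in E(G_1)$; iterated products are defined accordingly. The distance $d(x,y)$ between vertices is the length of a shortest $x$–$y$ path, and the distance between edges $e=xy$ and $f=zw$ is $\min\{d(x,z),d(x,w),d(y,z),d(y,w)\}$. A precoloring of $E_0$ is extendable if there is a proper edge coloring of the whole graph with $\chi'$ of the graph colors whose restriction to $E_0$ is the prescribed coloring. *)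

(* Finite simple graphs as symmetric irreflexive relations. *)
From mathcomp Require Import all_boot.
Set Implicit Arguments. Unset Strict Implicit. Unset Printing Implicit Defensive.

Section Graphs.
Variables (V : finType) (adj : rel V).

Definition edges : {set {set V}} :=
  [set e : {set V} | [exists x, exists y, adj x y && (e == [set x; y])]].

Definition Delta : nat := \max_(v : V) #|[set u | adj v u]|.

Definition proper_coloring (n : nat) (c : {set V} -> nat) : bool :=
  [forall e in edges, c e < n] &&
  [forall e in edges, forall f in edges,
      ((e != f) && (e :&: f != set0)) ==> (c e != c f)].

Definition colorable (n : nat) : bool :=
  [exists c : {ffun {set V} -> 'I_n.+1}, proper_coloring n (fun e => c e)].

Lemma colorable_exists : exists n, colorable n.
Proof.
exists #|{set V}|; apply/existsP.
exists [ffun e => inord (enum_rank e)].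
apply/andP; split.
  apply/forallP=> e; apply/implyP=> _; rewrite ffunE inordK //.
  by apply: (leq_trans (ltn_ord (enum_rank e))); rewrite cardE.
apply/forallP=> e; apply/implyP=> _; apply/forallP=> f; apply/implyP=> _.
apply/implyP=> /andP [nef _]; rewrite !ffunE.
have lt (x : {set V}) : (enum_rank x : nat) < #|{set V}|.+1.
  by apply: (leq_trans (ltn_ord (enum_rank x))); rewrite cardE.
rewrite inordK // inordK //.
apply: contra nef => /eqP H; apply/eqP.
by apply: enum_rank_inj; apply: val_inj.
Qed.

Definition chromatic_index : nat := ex_minn colorable_exists.

Definition class1 : Prop := chromatic_index = Delta.

(* d(x,y) >= m, where d is shortest-path distance (infinite if disconnected) *)
Definition dist_ge (x y : V) (m : nat) : Prop :=
  forall p : seq V, path adj x p -> last x p = y -> m <= size p.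

Definition edge_dist_ge (e f : {set V}) (m : nat) : Prop :=
  forall x y, x \in e -> y \in f -> dist_ge x y m.

End Graphs.

Definition prod_vertex (k : nat) (V : 'I_k -> finType) : finType :=
  {dffun forall i : 'I_k, V i}.

Definition prod_adj (k : nat) (V : 'I_k -> finType) (adj : forall i, rel (V i))
  : rel (prod_vertex V) :=
  fun x y => [exists i, adj i (x i) (y i) && [forall j, (j != i) ==> (x j == y j)]].

(* Give each factor G_i a proper Delta_i-edge-colouring and colour an edge of
   G in direction i by the colour of its projection, shifted into a block of
   Delta_i colours reserved for direction i.  This proper colouring uses
   D = sum_i Delta_i colours, and D is also a lower bound for chi'(G).
   Pair every colour q with q +- D/2: since 2 Delta_i < D, paired colours live
   in different directions, so the edges of a pair of colours form isolated
   edges and alternating squares, and exchanging the pair on such components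
   keeps the colouring proper.  A precoloured edge e is then fixed locally:
   exchange the pair of p e near e so that either e gets p e, or the edges at e
   of colour p e run in a direction other than that of e; in the latter case
   the Kempe chain of e for the colours of e and p e is e itself or a square,
   and exchanging these two colours on it gives e its colour.  All changes
   stay within distance two of the precoloured edge they serve, so the
   distance-three hypothesis keeps them from interfering. *)

From mathcomp Require Import all_boot zify.
Set Implicit Arguments. Unset Strict Implicit. Unset Printing Implicit Defensive.

Section EdgeColorings.
Variables (V : finType) (adj : rel V).
Hypothesis adj_irr : irreflexive adj.

Definition locally_injective (c : {set V} -> nat) :=
  forall h h' w, h \in edges adj -> h' \in edges adj -> h != h' ->
    w \in h -> w \in h' -> c h != c h'.

Lemma edgesP h : reflect (exists x y, adj x y /\ h = [set x; y]) (h \in edges adj).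
Proof.
rewrite inE; apply: (iffP existsP) => [[x /existsP[y /andP[xy /eqP ->]]] | [x [y [xy ->]]]].
  by exists x, y.
by exists x; apply/existsP; exists y; rewrite xy eqxx.
Qed.

Lemma edges_pair x y : adj x y -> [set x; y] \in edges adj.
Proof. by move=> xy; apply/edgesP; exists x, y. Qed.

Lemma edge_vertex h : h \in edges adj -> exists x, x \in h.
Proof. by case/edgesP => x [y [_ ->]]; exists x; rewrite set21. Qed.

Lemma proper_coloringP n c :
  reflect ((forall h, h \in edges adj -> c h < n) /\ locally_injective c)
          (proper_coloring adj n c).
Proof.
apply: (iffP andP) => [[/forall_inP lt /forall_inP inj] | [lt inj]]; split.
- exact: lt.
- move=> h h' w hE h'E hh' wh wh'; have /forall_inP/(_ h' h'E)/implyP := inj h hE.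
  by apply; rewrite hh'; apply/set0Pn; exists w; rewrite inE wh.
- exact/forall_inP.
apply/forall_inP => h hE; apply/forall_inP => h' h'E; apply/implyP.
by case/andP => hh' /set0Pn[w]; rewrite inE => /andP[wh wh']; apply: inj wh wh'.
Qed.

Lemma locally_injective_pair c x y y' : locally_injective c ->
  adj x y -> adj x y' -> c [set x; y] = c [set x; y'] -> y = y'.
Proof.
move=> inj xy xy' cxy; apply/eqP; apply: contraT => yy'.
have hh' : [set x; y] != [set x; y'].
  apply: contraNneq yy' => /setP/(_ y); rewrite !inE eqxx orbT => /esym/orP[/eqP yx | //].
  by rewrite yx adj_irr in xy.
by have := inj _ _ x (edges_pair xy) (edges_pair xy') hh'; rewrite !set21 cxy eqxx => /(_ isT isT).
Qed.

Lemma recolor_locally_injective c c' (sigma : {set V} -> nat -> nat) :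
  locally_injective c -> (forall h, injective (sigma h)) ->
  (forall h, c' h = sigma h (c h)) ->
  (forall h h' w, h \in edges adj -> h' \in edges adj -> w \in h -> w \in h' ->
     c' h = c' h' -> sigma h =1 sigma h') ->
  locally_injective c'.
Proof.
move=> inj sigma_inj c'E same h h' w hE h'E hh' wh wh'; apply/eqP => eq_c'.
have /(_ (c h')) eq_sigma := same _ _ _ hE h'E wh wh' eq_c'.
move: eq_c'; rewrite !c'E -eq_sigma => /sigma_inj eq_c.
by have := inj _ _ _ hE h'E hh' wh wh'; rewrite eq_c eqxx.
Qed.

(* [U] is a union of Kempe chains for the colours [cs]. *)
Definition color_saturated c (U : {set V}) (cs : seq nat) :=
  forall w a, w \in U -> a \in cs ->
    (exists2 g, g \in edges adj & [/\ w \in g, g \subset U & c g = a])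
    \/ (forall g, g \in edges adj -> w \in g -> c g != a).

Lemma color_saturated_closed c U cs h w : locally_injective c -> color_saturated c U cs ->
  w \in U -> h \in edges adj -> w \in h -> c h \in cs -> h \subset U.
Proof.
move=> inj sat wU hE wh chs; case: (sat w (c h) wU chs) => [[g gE [wg gU cg]] | none].
  case: (eqVneq g h) => [<- // | gh].
  by have := inj _ _ _ gE hE gh wg wh; rewrite cg eqxx.
by have := none h hE wh; rewrite eqxx.
Qed.

Definition colors_at (c : {set V} -> nat) v := [seq c [set v; u] | u in [set u | adj v u]].

Section ProperColoring.
Variables (n : nat) (c : {set V} -> nat).
Hypothesis c_proper : proper_coloring adj n c.

Lemma colors_at_uniq v : uniq (colors_at c v).
Proof.
have [_ inj] := proper_coloringP _ _ c_proper.
rewrite map_inj_in_uniq ?enum_uniq // => u u'; rewrite !mem_enum !inE => vu vu'.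
exact: locally_injective_pair inj vu vu'.
Qed.

Lemma colors_at_sub v : {subset colors_at c v <= iota 0 n}.
Proof.
have [lt _] := proper_coloringP _ _ c_proper.
by move=> a /mapP[u]; rewrite mem_enum inE mem_iota => /edges_pair/lt ? ->.
Qed.

Lemma degree_le_colors v : #|[set u | adj v u]| <= n.
Proof.
by have := uniq_leq_size (colors_at_uniq v) (@colors_at_sub v); rewrite size_iota size_image.
Qed.

Lemma full_degree_all_colors v a : #|[set u | adj v u]| = n -> a < n ->
  exists2 u, adj v u & c [set v; u] = a.
Proof.
move=> dv an; have full : size (iota 0 n) <= size (colors_at c v).
  by rewrite size_iota size_image dv.
have [_ /(_ a)] := uniq_min_size (colors_at_uniq v) (@colors_at_sub v) full.
rewrite mem_iota add0n an => /mapP[u]; rewrite mem_enum inE => vu ->; by exists u.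
Qed.

End ProperColoring.

Lemma degree_le_chromatic_index v : #|[set u | adj v u]| <= chromatic_index adj.
Proof.
rewrite /chromatic_index; case: ex_minnP => m /existsP[c c_proper] _.
exact: (@degree_le_colors m (fun e => c e) c_proper v).
Qed.

Lemma class1_coloring : class1 adj ->
  exists c : {set V} -> nat, proper_coloring adj (Delta adj) c.
Proof.
rewrite /class1 /chromatic_index; case: ex_minnP => m /existsP[c c_proper] _ <-.
by exists (fun h => nat_of_ord (c h)).
Qed.

End EdgeColorings.

Section Blocks.
Variable d : nat -> nat.

Definition offset n := \sum_(j < n) d j.

Lemma offsetS n : offset n.+1 = offset n + d n.
Proof. by rewrite /offset big_ord_recr. Qed.

Lemma offset_mono : {homo offset : m n / m <= n}.
Proof.
move=> m n /subnKC <-; elim: (n - m) => [|t IH]; first by rewrite addn0.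
by rewrite addnS offsetS (leq_trans IH) ?leq_addr.
Qed.

Lemma offset_block_le i j : i < j -> offset i + d i <= offset j.
Proof. by rewrite -offsetS; apply: offset_mono. Qed.

Lemma block_unique i j q :
  offset i <= q < offset i + d i -> offset j <= q < offset j + d j -> i = j.
Proof.
move=> qi qj; case: (ltngtP i j) => [/offset_block_le | /offset_block_le | //]; lia.
Qed.

Lemma block_cover n q : q < offset n -> exists2 i, i < n & offset i <= q < offset i + d i.
Proof.
elim: n => [|n IH]; first by rewrite /offset big_ord0.
rewrite offsetS; case: (ltnP q (offset n)) => [/IH[i in_ qi] _ | nq qn].
  by exists i => //; rewrite ltnS ltnW.
by exists n; rewrite ?nq.
Qed.

End Blocks.

Section Mates.
Variable n : nat.
Hypothesis n_even : ~~ odd n.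
Local Notation h := n./2.

(* Pairs [q < n] with [q +- n/2]; it fixes [q >= n] so as to be injective. *)
Definition mate q := if q < h then q + h else if q < n then q - h else q.

Lemma modn_half q : q < n -> q %% h = if q < h then q else q - h.
Proof.
move=> qn; case: ifPn => [/modn_small // | qh].
have hq : h <= q by rewrite leqNgt.
by rewrite -{1}(subnK hq) modnDr modn_small //; have := even_halfK n_even; lia.
Qed.

Lemma mate_dist q : q < n -> mate q = q + h \/ q = mate q + h.
Proof.
by move=> qn; rewrite /mate; have hn := even_halfK n_even; repeat (case: ifPn => ?); lia.
Qed.

Lemma mate_lt q : q < n -> mate q < n.
Proof.
by move=> qn; rewrite /mate; have hn := even_halfK n_even; repeat (case: ifPn => ?); lia.
Qed.

Lemma mateK : involutive mate.
Proof.
move=> q; rewrite {2}/mate; have hn := even_halfK n_even.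
by case: (ltnP q h) => ?; [|case: (ltnP q n) => ?]; rewrite /mate; repeat (case: ifPn => ?); lia.
Qed.

Lemma mate_neq q : 0 < n -> q < n -> mate q != q.
Proof.
by move=> n0 qn; rewrite /mate; have hn := even_halfK n_even; repeat (case: ifPn => ?); lia.
Qed.

Lemma modn_mate q : q < n -> mate q %% h = q %% h.
Proof.
move=> qn; rewrite !modn_half ?mate_lt // /mate; have hn := even_halfK n_even.
by case: (ltnP q h) => ?; [|case: (ltnP q n) => ?]; repeat (case: ifPn => ?); lia.
Qed.

Lemma eq_modn_mate q r : q < n -> r < n -> q %% h = r %% h -> r = q \/ r = mate q.
Proof.
move=> qn rn; rewrite !modn_half // /mate; have hn := even_halfK n_even.
by repeat (case: ifPn => ?); lia.
Qed.

End Mates.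

Section Swap.
Variables a b : nat.

Definition swap c := if c == a then b else if c == b then a else c.

Lemma swapK : involutive swap.
Proof.
move=> c; rewrite /swap; case: (eqVneq c a) => [-> | ca]; first by rewrite eqxx; case: eqVneq.
by case: (eqVneq c b) => [-> | cb]; rewrite ?eqxx // (negbTE ca) (negbTE cb).
Qed.

Lemma swap_mem c : c \in [:: a; b] -> swap c \in [:: a; b].
Proof. by rewrite /swap !inE; case: eqP => _; rewrite ?eqxx ?orbT //; case: eqP; rewrite ?eqxx. Qed.

Lemma swap_lt n c : a < n -> b < n -> c < n -> swap c < n.
Proof. by rewrite /swap; case: eqP => //; case: eqP. Qed.

End Swap.

Section CartesianProduct.
Variables (k : nat) (V : 'I_k -> finType) (adj : forall i, rel (V i)).
Arguments adj : clear implicits.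
Hypothesis adj_sym : forall i, symmetric (adj i).
Hypothesis adj_irr : forall i, irreflexive (adj i).
Local Notation vert := (prod_vertex V).
Local Notation padj := (prod_adj adj).

Definition upd (x : vert) i (a : V i) : vert :=
  [ffun j => if i =P j is ReflectT e then ecast j (V j) e a else x j].
Arguments upd x i a : clear implicits.

Lemma upd_same (x : vert) i a : upd x i a i = a.
Proof. by rewrite ffunE; case: eqP => // e; rewrite (eq_irrelevance e erefl). Qed.

Lemma upd_other (x : vert) i a j : i != j -> upd x i a j = x j.
Proof. by rewrite ffunE; case: eqP. Qed.

Lemma prod_adjP (x y : vert) :
  reflect (exists i, adj i (x i) (y i) /\ forall j, j != i -> x j = y j) (padj x y).
Proof.
apply: (iffP existsP) => [[i /andP[xy /forallP eq_xy]] | [i [xy eq_xy]]]; exists i.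
  by split=> // j ji; move/(_ j): eq_xy; rewrite ji => /eqP.
by rewrite xy; apply/forallP => j; apply/implyP => /eq_xy ->.
Qed.

Lemma prod_adj_sym : symmetric padj.
Proof.
by move=> x y; apply/prod_adjP/prod_adjP => [][i [xy eq_xy]]; exists i;
  rewrite adj_sym; split=> // j /eq_xy.
Qed.

Lemma prod_adj_irr : irreflexive padj.
Proof. by move=> x; apply/prod_adjP => [][i []]; rewrite adj_irr. Qed.

Lemma prod_adj_upd (x : vert) i a : adj i (x i) a -> padj x (upd x i a).
Proof.
move=> xa; apply/prod_adjP; exists i; rewrite upd_same; split=> // j ji.
by rewrite upd_other // eq_sym.
Qed.

Definition proj (h : {set vert}) i : {set V i} := [set (x : vert) i | x in h].

Lemma proj_pair (x y : vert) i : proj [set x; y] i = [set x i; y i].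
Proof. by rewrite /proj imsetU1 imset_set1. Qed.

Variable i0 : 'I_k.

(* [i0] is only returned for sets that are not edges. *)
Definition direction (h : {set vert}) : 'I_k := odflt i0 [pick i | 1 < #|proj h i|].

Lemma direction_pair (x y : vert) i : adj i (x i) (y i) ->
  (forall j, j != i -> x j = y j) -> direction [set x; y] = i.
Proof.
move=> xy eq_xy; rewrite /direction; case: pickP => [j | /(_ i)] /=; rewrite proj_pair cards2.
  by case: (eqVneq j i) => [//|/eq_xy ->]; rewrite eqxx.
by case: eqP => // e; rewrite e adj_irr in xy.
Qed.

Section CanonicalColoring.
Variable cc : forall i, {set V i} -> nat.
Arguments cc : clear implicits.
Hypothesis cc_proper : forall i, proper_coloring (adj i) (Delta (adj i)) (cc i).
Local Notation Dl i := (Delta (adj i)).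

(* Padded with zeros beyond [k], so that the colour blocks can be indexed by [nat]. *)
Definition factor_Delta j := oapp (fun i : 'I_k => Dl i) 0 (insub j).
Local Notation offs i := (offset factor_Delta i).
Definition total_degree := offs k.
Local Notation D := total_degree.

Lemma factor_DeltaE (i : 'I_k) : factor_Delta i = Dl i.
Proof. by rewrite /factor_Delta valK. Qed.

Lemma total_degreeE : D = \sum_(i < k) Dl i.
Proof. by apply: eq_bigr => i _; rewrite factor_DeltaE. Qed.

Lemma block_end (i : 'I_k) : offs i + Dl i <= D.
Proof. by rewrite -factor_DeltaE -offsetS; apply: offset_mono. Qed.

Definition block q : 'I_k := odflt i0 [pick i : 'I_k | offs i <= q < offs i + Dl i].

Lemma blockE (i : 'I_k) c : c < Dl i -> block (offs i + c) = i.
Proof.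
move=> ci; have qi : offs i <= offs i + c < offs i + Dl i by rewrite leq_addr ltn_add2l.
rewrite /block; case: pickP => [j /= qj | /(_ i)]; last by rewrite qi.
by apply/val_inj/(@block_unique factor_Delta _ _ (offs i + c)); rewrite !factor_DeltaE.
Qed.

Lemma block_spec q : q < D -> offs (block q) <= q < offs (block q) + Dl (block q).
Proof.
move=> qD; rewrite /block; case: pickP => [//| none].
have [j jk qj] := block_cover qD.
by have := none (Ordinal jk); rewrite -factor_DeltaE qj.
Qed.

Lemma cc_lt i a b : adj i a b -> cc i [set a; b] < Dl i.
Proof. by move=> ab; have [lt _] := proper_coloringP _ _ _ (cc_proper i); apply/lt/edges_pair. Qed.

Lemma cc_locally_injective i : locally_injective (adj i) (cc i).
Proof. by have [] := proper_coloringP _ _ _ (cc_proper i). Qed.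

Definition base_col (h : {set vert}) :=
  offs (direction h) + cc (direction h) (proj h (direction h)).

Lemma base_col_pair (x y : vert) i : adj i (x i) (y i) ->
  (forall j, j != i -> x j = y j) -> base_col [set x; y] = offs i + cc i [set x i; y i].
Proof. by move=> xy eq_xy; rewrite /base_col (direction_pair xy eq_xy) proj_pair. Qed.

Definition adj_by q (x y : vert) := padj x y && (base_col [set x; y] == q).

Lemma adj_byP q (x y : vert) : adj_by q x y ->
  [/\ q < D, adj (block q) (x (block q)) (y (block q)),
      forall j, j != block q -> x j = y j
    & q = offs (block q) + cc (block q) [set x (block q); y (block q)]].
Proof.
case/andP => /prod_adjP[i [xy eq_xy]] /eqP; rewrite (base_col_pair xy eq_xy) => <-.
rewrite blockE ?cc_lt //; split => //.
by apply: leq_trans (block_end i); rewrite ltn_add2l cc_lt.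
Qed.

Lemma adj_by_lt q (x y : vert) : adj_by q x y -> q < D.
Proof. by case/adj_byP. Qed.

Lemma adj_by_adj q (x y : vert) : adj_by q x y -> padj x y.
Proof. by case/andP. Qed.

Lemma adj_by_sym q : symmetric (adj_by q).
Proof. by move=> x y; rewrite /adj_by prod_adj_sym setUC. Qed.

Lemma adj_by_edge q (x y : vert) : adj_by q x y -> [set x; y] \in edges padj.
Proof. by move/adj_by_adj/edges_pair. Qed.

Lemma edge_adj_by h (x : vert) : h \in edges padj -> x \in h ->
  exists2 y, h = [set x; y] & adj_by (base_col h) x y.
Proof.
case/edgesP => a [b [ab ->]].
rewrite !inE => /orP[/eqP-> | /eqP->]; first by exists b => //; rewrite /adj_by ab eqxx.
by exists a; rewrite 1?setUC // /adj_by prod_adj_sym ab setUC eqxx.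
Qed.

Lemma adj_by_uniq q (x y y' : vert) : adj_by q x y -> adj_by q x y' -> y = y'.
Proof.
move=> /adj_byP[_ xy eq_xy qxy] /adj_byP[_ xy' eq_xy' qxy'].
have yq : y (block q) = y' (block q).
  by apply: (locally_injective_pair (@adj_irr _) (@cc_locally_injective _) xy xy'); lia.
apply/ffunP => j; case: (eqVneq j (block q)) => [-> // | jq].
by rewrite -eq_xy // -eq_xy'.
Qed.

Lemma adj_by_shift q (x y x' : vert) : adj_by q x y -> x' (block q) = x (block q) ->
  adj_by q x' (upd x' (block q) (y (block q))).
Proof.
move=> /adj_byP[_ xy eq_xy qxy] ex.
have x'y : adj (block q) (x' (block q)) (y (block q)) by rewrite ex.
apply/andP; split; first exact: prod_adj_upd.
rewrite (@base_col_pair _ _ (block q)) ?upd_same ?ex -?qxy //.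
by move=> j jq; rewrite upd_other // eq_sym.
Qed.

Lemma adj_by_square q r (x u z : vert) : adj_by q x u -> adj_by r x z -> block q != block r ->
  exists2 w, adj_by r u w & adj_by q z w.
Proof.
move=> xu xz qr; have [_ _ eq_xu _] := adj_byP xu; have [_ _ eq_xz _] := adj_byP xz.
exists (upd u (block r) (z (block r))).
  by apply: adj_by_shift xz _; rewrite eq_xu // eq_sym.
have -> : upd u (block r) (z (block r)) = upd z (block q) (u (block q)).
  apply/ffunP => j; case: (eqVneq (block r) j) => [<- | rj].
    by rewrite upd_same upd_other // eq_sym.
  rewrite upd_other //; case: (eqVneq (block q) j) => [<- | qj]; first by rewrite upd_same.
  by rewrite upd_other // -eq_xu ?eq_xz // eq_sym.
by apply: adj_by_shift xu _; rewrite eq_xz.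
Qed.

Lemma base_col_lt h : h \in edges padj -> base_col h < D.
Proof.
move=> hE; have [x xh] := edge_vertex hE.
by have [z _ /adj_by_lt] := edge_adj_by hE xh.
Qed.

Lemma base_col_locally_injective : locally_injective padj base_col.
Proof.
move=> h h' w hE h'E hh' wh wh'; apply: contraNneq hh' => same.
have [y hy wy] := edge_adj_by hE wh; have [y' hy' wy'] := edge_adj_by h'E wh'.
by rewrite hy hy'; rewrite same in wy; rewrite (adj_by_uniq wy wy').
Qed.

Lemma adj_by_exists (X : vert) q : (forall i, #|[set u | adj i (X i) u]| = Dl i) ->
  q < D -> exists Y, adj_by q X Y.
Proof.
move=> degX qD; have /andP[qlo qhi] := block_spec qD; set i := block q in qlo qhi.
have qi : q - offs i < Dl i by lia.
have [u Xu cu] := full_degree_all_colors (@adj_irr i) (cc_proper i) (degX i) qi.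
exists (upd X i u); apply/andP; split; first exact: prod_adj_upd.
rewrite (@base_col_pair _ _ i) ?upd_same ?cu //; first by apply/eqP; lia.
by move=> j ji; rewrite upd_other // eq_sym.
Qed.

Lemma total_degree_le_chromatic_index (z : vert) : D <= chromatic_index padj.
Proof.
pose X : vert := [ffun i => [arg max_(v > z i) #|[set u | adj i v u]|]].
have degX i : #|[set u | adj i (X i) u]| = Dl i by rewrite ffunE /Delta (bigmax_eq_arg (z i)).
pose Y (q : 'I_D) := odflt X [pick Y | adj_by q X Y].
have XY (q : 'I_D) : adj_by q X (Y q).
  rewrite /Y; case: pickP => [// | none].
  by have [Y' XY'] := adj_by_exists degX (ltn_ord q); rewrite none in XY'.
have Y_inj : injective Y.
  move=> q q' eq_Y; apply: ord_inj.
  by case/andP: (XY q) => _ /eqP <-; case/andP: (XY q') => _ /eqP <-; rewrite eq_Y.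
apply: leq_trans (degree_le_chromatic_index prod_adj_irr X).
rewrite -[D in D <= _]card_ord -(card_imset _ Y_inj).
apply/subset_leq_card/subsetP => _ /imsetP[q _ ->].
by rewrite inE (adj_by_adj (XY q)).
Qed.

Section Pairing.
Hypothesis D_even : ~~ odd D.
Hypothesis Delta_small : forall i, 2 * Dl i < D.
Local Notation half := D./2.
Local Notation mate := (mate D).

Lemma D_gt0 : 0 < D.
Proof. by have := Delta_small i0; lia. Qed.

Lemma block_mate q : q < D -> block (mate q) != block q.
Proof.
move=> qD; apply/eqP => same; have := block_spec qD; have := block_spec (mate_lt D_even qD).
rewrite same; have := even_halfK D_even; have := Delta_small (block q).
by case: (mate_dist D_even qD); lia.
Qed.

Lemma adj_by_class q r (x y z : vert) : adj_by q x y -> adj_by r x z ->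
  q %% half = r %% half -> q != r -> r = mate q /\ block r != block q.
Proof.
move=> xy xz qr /negbTE neq; have qD := adj_by_lt xy; have rD := adj_by_lt xz.
case: (eq_modn_mate D_even qD rD qr) => [rq | ->]; first by rewrite rq eqxx in neq.
by split => //; apply: block_mate.
Qed.

Lemma adj_by_back q (v w w' : vert) : adj_by q v w -> adj_by q w w' -> w' = v.
Proof. by rewrite adj_by_sym => vw ww'; apply: adj_by_uniq ww' vw. Qed.

(* Components of the subgraph of the colours of residue [F] are edges and
   alternating squares (adj_by_class, adj_by_square), so two steps suffice. *)
Definition step F (v w : vert) := [exists q : 'I_D, (q %% half == F) && adj_by q v w].

Definition reach F (v w : vert) :=
  [|| w == v, step F v w | [exists u, step F v u && step F u w]].

Lemma stepP F (v w : vert) : reflect (exists2 q, q %% half = F & adj_by q v w) (step F v w).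
Proof.
apply: (iffP existsP) => [[q /andP[/eqP qF vw]] | [q qF vw]]; first by exists q.
by exists (Ordinal (adj_by_lt vw)); rewrite /= qF eqxx.
Qed.

Lemma step_sym F (v w : vert) : step F v w -> step F w v.
Proof. by case/stepP => q qF vw; apply/stepP; exists q; rewrite // adj_by_sym. Qed.

Lemma step_adj F (v w : vert) : step F v w -> padj v w.
Proof. by case/stepP => q _ /adj_by_adj. Qed.

Lemma step2_reach F (v u w : vert) : step F v u -> step F u w -> reach F v w.
Proof. by move=> vu uw; apply/or3P; constructor 3; apply/existsP; exists u; rewrite vu. Qed.

Lemma step3_reach F (v u w w' : vert) :
  step F v u -> step F u w -> step F w w' -> reach F v w'.
Proof.
case/stepP => q1 q1F vu /stepP[q2 q2F uw] /stepP[q qF ww'].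
have reach1 q' y : q' %% half = F -> adj_by q' v y -> reach F v y.
  by move=> q'F vy; apply/or3P; constructor 2; apply/stepP; exists q'.
case: (eqVneq q2 q) => [eq_q | ne2].
  by rewrite -eq_q in ww'; rewrite (adj_by_back uw ww'); apply: reach1 q1F vu.
case: (eqVneq q1 q2) => [eq_q1 | ne12].
  by rewrite eq_q1 in vu; rewrite (adj_by_back vu uw) in ww'; apply: reach1 qF ww'.
have uv : adj_by q1 u v by rewrite adj_by_sym.
have wu : adj_by q2 w u by rewrite adj_by_sym.
have [eq_q2 blocks] := adj_by_class uv uw (etrans q1F (esym q2F)) ne12.
have [eq_q _] := adj_by_class wu ww' (etrans q2F (esym qF)) ne2.
rewrite eq_q eq_q2 (mateK D_even) in ww'.
rewrite eq_sym in blocks; have [z vz wz] := adj_by_square uv uw blocks.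
by rewrite (adj_by_uniq ww' wz); apply: reach1 q2F vz.
Qed.

Lemma reach_step F (v w w' : vert) : reach F v w -> step F w w' -> reach F v w'.
Proof.
case/or3P => [/eqP -> vw' | vw ww' | /existsP[u /andP[vu uw]] ww'].
- by apply/or3P; constructor 2.
- exact: step2_reach vw ww'.
- exact: step3_reach vu uw ww'.
Qed.

Lemma reach_sym F (v w : vert) : reach F v w -> reach F w v.
Proof.
case/or3P => [/eqP -> | /step_sym wv | /existsP[u /andP[vu uw]]]; first by rewrite /reach eqxx.
  by apply/or3P; constructor 2.
exact: step2_reach (step_sym uw) (step_sym vu).
Qed.

Lemma reach_endpoint F (v w y : vert) : step F y w ->
  [exists z in [set w; y], reach F v z] = reach F v w.
Proof.
move=> yw; apply/existsP/idP => [[z /andP[]] | vw]; last by exists w; rewrite !inE eqxx.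
by rewrite !inE => /orP[/eqP-> // | /eqP->] /reach_step; apply.
Qed.

Definition within2 (u v : vert) := exists s, [/\ path padj u s, last u s = v & size s <= 2].

Lemma within2_refl (u : vert) : within2 u u.
Proof. by exists [::]. Qed.

Lemma within2_adj (u v : vert) : padj u v -> within2 u v.
Proof. by exists [:: v]; rewrite /= andbT. Qed.

Lemma within2_adj2 (u w v : vert) : padj u w -> padj w v -> within2 u v.
Proof. by move=> uw wv; exists [:: w; v]; rewrite /= uw wv. Qed.

Lemma reach_within2 F (v w : vert) : reach F v w -> within2 v w.
Proof.
case/or3P => [/eqP -> | /step_adj/within2_adj // | /existsP[u /andP[vu uw]]].
  exact: within2_refl.
exact: within2_adj2 (step_adj vu) (step_adj uw).
Qed.

Lemma reach_edge_near s (x y v : vert) : adj_by s x y -> reach (s %% half) x v ->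
  [|| v == x, padj x v | padj y v].
Proof.
move=> xy; case/or3P => [-> // | /step_adj -> | /existsP[u /andP[/stepP[q1 q1F xu]]]].
  by rewrite orbT.
case/stepP => q2 q2F uv.
case: (eqVneq s q1) => [eq_s | ne1].
  rewrite -eq_s in xu; rewrite -(adj_by_uniq xy xu) in uv.
  by rewrite (adj_by_adj uv) !orbT.
have [eq_q1 blocks] := adj_by_class xy xu (esym q1F) ne1.
case: (eqVneq q1 q2) => [eq_q2 | ne2].
  by rewrite -eq_q2 in uv; rewrite (adj_by_back xu uv) eqxx.
have ux : adj_by q1 u x by rewrite adj_by_sym.
have [eq_s _] := adj_by_class ux uv (etrans q1F (esym q2F)) ne2.
rewrite eq_q1 (mateK D_even) in eq_s; rewrite eq_s in uv.
rewrite eq_sym in blocks; have [z yz uz] := adj_by_square xy xu blocks.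
by rewrite (adj_by_uniq uv uz) (adj_by_adj yz) !orbT.
Qed.

Section Precoloring.
Variables (E0 : {set {set vert}}) (p : {set vert} -> nat).
Hypothesis E0_edges : E0 \subset edges padj.
Hypothesis p_lt : forall e, e \in E0 -> p e < D.
Hypothesis E0_far : forall e f, e \in E0 -> f \in E0 -> e != f -> edge_dist_ge padj e f 3.

Lemma E0_edge e : e \in E0 -> e \in edges padj.
Proof. exact: (subsetP E0_edges). Qed.

Lemma E0_apart e f (u v : vert) :
  e \in E0 -> f \in E0 -> e != f -> u \in e -> v \in f -> ~ within2 u v.
Proof. by move=> eE fE ef ue vf [s [us sv ss]]; have := E0_far eE fE ef ue vf us sv; lia. Qed.

Definition same_class e := p e %% half == base_col e %% half.

(* Exchanging the pair class of [p e] near [e] either gives [e] the colour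
   [p e], or makes the edges of colour [p e] at [e] (of base colour
   [source_col e]) run in another direction than [e]. *)
Definition flips e :=
  if same_class e then p e != base_col e else block (p e) == block (base_col e).

Definition flipped h :=
  [exists e in E0, [&& flips e, base_col h %% half == p e %% half
    & [exists v in e, exists z in h, reach (p e %% half) v z]]].

Definition flip_col h := if flipped h then mate (base_col h) else base_col h.

Lemma flip_col_lt h : h \in edges padj -> flip_col h < D.
Proof. by move=> hE; rewrite /flip_col; case: ifP; rewrite ?mate_lt ?base_col_lt. Qed.

Lemma modn_flip_col h : h \in edges padj -> flip_col h %% half = base_col h %% half.
Proof. by move=> hE; rewrite /flip_col; case: ifP; rewrite ?modn_mate ?base_col_lt. Qed.

Lemma flipped_near e x h : e \in E0 -> x \in e -> h \in edges padj -> x \in h ->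
  flipped h = flips e && (base_col h %% half == p e %% half).
Proof.
move=> eE xe hE xh; apply/idP/idP => [| /andP[fl cl]]; last first.
  apply/exists_inP; exists e; rewrite // fl cl; apply/exists_inP; exists x => //.
  by apply/exists_inP; exists x; rewrite // /reach eqxx.
case/exists_inP => f fE /and3P[flf clf /exists_inP[v vf /exists_inP[z zh vz]]].
case: (eqVneq f e) => [<- | fe]; first by rewrite flf clf.
have [y hxy xy] := edge_adj_by hE xh.
have yx : step (p f %% half) y x.
  by apply/stepP; exists (base_col h); [apply/eqP | rewrite adj_by_sym].
have vx : reach (p f %% half) v x.
  by rewrite -(reach_endpoint _ yx); apply/exists_inP; exists z; rewrite -?hxy.
by case: (E0_apart fE eE fe vf xe (reach_within2 vx)).
Qed.

Lemma flipped_adjacent h h' w : h \in edges padj -> h' \in edges padj -> w \in h -> w \in h' ->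
  base_col h %% half = base_col h' %% half -> flipped h = flipped h'.
Proof.
move=> hE h'E wh wh' cl.
have [y hy wy] := edge_adj_by hE wh; have [y' hy' wy'] := edge_adj_by h'E wh'; subst h h'.
apply: eq_existsb_in => e _; rewrite cl; case: (flips e) => //=.
case: eqP => //= cl'; apply: eq_existsb_in => v _.
rewrite !reach_endpoint //; apply/stepP.
  by exists (base_col [set w; y']); rewrite // adj_by_sym.
by exists (base_col [set w; y]); rewrite ?cl // adj_by_sym.
Qed.

Lemma flip_col_locally_injective : locally_injective padj flip_col.
Proof.
apply: (@recolor_locally_injective _ _ base_col _ (fun h => if flipped h then mate else id)).
- exact: (@base_col_locally_injective).
- by move=> h; case: flipped; [apply/inv_inj/mateK | apply: inj_id].
- by move=> h; rewrite /flip_col; case: flipped.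
move=> h h' w hE h'E wh wh' same.
have cl : base_col h %% half = base_col h' %% half.
  by rewrite -(modn_flip_col hE) -(modn_flip_col h'E) same.
by rewrite (flipped_adjacent hE h'E wh wh' cl).
Qed.

Lemma flipped_E0 e : e \in E0 -> flipped e = flips e && same_class e.
Proof.
move=> eE; have [x xe] := edge_vertex (E0_edge eE).
by rewrite (flipped_near eE xe (E0_edge eE) xe) eq_sym.
Qed.

Lemma flip_col_same_class e : e \in E0 -> same_class e -> flip_col e = p e.
Proof.
move=> eE sc; rewrite /flip_col flipped_E0 // /flips sc andbT.
have [-> | ->] := eq_modn_mate D_even (base_col_lt (E0_edge eE)) (p_lt eE) (esym (eqP sc)).
  by rewrite eqxx.
by rewrite mate_neq ?base_col_lt ?E0_edge ?D_gt0.
Qed.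

Lemma flip_col_base e : e \in E0 -> ~~ same_class e -> flip_col e = base_col e.
Proof.
by move=> eE sc; rewrite /flip_col flipped_E0 // (negbTE sc) andbF.
Qed.

Definition source_col e := if flips e then mate (p e) else p e.

Lemma block_source_col e : e \in E0 -> ~~ same_class e ->
  block (source_col e) != block (base_col e).
Proof.
move=> eE sc; rewrite /source_col /flips (negbTE sc).
case: (eqVneq (block (p e)) (block (base_col e))) => [same | //].
by have := block_mate (p_lt eE); rewrite same.
Qed.

Lemma flip_col_eq_p e x h : e \in E0 -> ~~ same_class e -> x \in e ->
  h \in edges padj -> x \in h -> (flip_col h == p e) = (base_col h == source_col e).
Proof.
move=> eE sc xe hE xh; rewrite /flip_col (flipped_near eE xe hE xh) /source_col.
case: (eqVneq (base_col h %% half) (p e %% half)) => [_ | cl]; rewrite ?andbT ?andbF.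
  case: (flips e) => //; apply/eqP/eqP => [<- | ->]; rewrite (mateK D_even) //.
have cl_src : (if flips e then mate (p e) else p e) %% half = p e %% half.
  by case: (flips e); rewrite ?modn_mate ?p_lt.
have ne1 : (base_col h == p e) = false by apply: contraNF cl => /eqP ->.
have ne2 : (base_col h == if flips e then mate (p e) else p e) = false.
  by apply: contraNF cl => /eqP ->; rewrite cl_src.
by rewrite ne1 ne2.
Qed.

Lemma flip_col_far_edge e x y x' y' : e \in E0 -> ~~ same_class e -> e = [set x; y] ->
  adj_by (source_col e) x x' -> adj_by (source_col e) y y' -> adj_by (base_col e) x' y' ->
  flip_col [set x'; y'] = base_col e.
Proof.
move=> eE sc exy xx' yy' x'y'; have /andP[_ /eqP col_x'y'] := x'y'.
rewrite /flip_col col_x'y'; case: ifPn => // /exists_inP[f fE /and3P[_ cl]].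
case/exists_inP => v vf /exists_inP[z zy' vz].
have fe : f != e by apply: contraNneq sc => fe; move: cl; rewrite col_x'y' fe eq_sym.
have y'x' : step (p f %% half) y' x'.
  by apply/stepP; exists (base_col e); [apply/eqP; rewrite -col_x'y' | rewrite adj_by_sym].
have vx' : reach (p f %% half) v x'.
  by rewrite -(reach_endpoint _ y'x'); apply/exists_inP; exists z.
have xe : x \in e by rewrite exy !inE eqxx.
have ye : y \in e by rewrite exy !inE eqxx orbT.
move: (reach_sym vx'); rewrite -(eqP cl) col_x'y' => /(reach_edge_near x'y') near.
have ef : e != f by rewrite eq_sym.
have [xv | yv] : within2 x v \/ within2 y v.
  case/or3P: near => [/eqP -> | x'v | y'v].
  - by left; apply/within2_adj/(adj_by_adj xx').
  - by left; apply: within2_adj2 (adj_by_adj xx') x'v.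
  - by right; apply: within2_adj2 (adj_by_adj yy') y'v.
- by case: (E0_apart eE fE ef xe vf xv).
- by case: (E0_apart eE fE ef ye vf yv).
Qed.

(* The ends of [e], or the corners of an alternating square through [e] with
   colours [base_col e] and [p e] after flipping. *)
Definition swap_zone e := e :|: [set w | [exists u in e, adj_by (source_col e) u w]].

Lemma swap_zoneP e w : w \in swap_zone e ->
  exists2 u, u \in e & w = u \/ adj_by (source_col e) u w.
Proof.
rewrite !inE => /orP[we | /exists_inP[u ue uw]]; first by exists w; [|left].
by exists u; [|right].
Qed.

Lemma swap_zone_disjoint e f w : e \in E0 -> f \in E0 -> e != f ->
  w \in swap_zone e -> w \notin swap_zone f.
Proof.
move=> eE fE ef /swap_zoneP[u ue uw]; apply/negP => /swap_zoneP[v vf vw].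
apply: (E0_apart eE fE ef ue vf).
case: uw vw => [<- | /adj_by_adj uw] [<- | /adj_by_adj vw].
- exact: within2_refl.
- by apply: within2_adj; rewrite prod_adj_sym.
- exact: within2_adj.
- by apply: within2_adj2 uw _; rewrite prod_adj_sym.
Qed.

Lemma flip_col_source_edge e u u' : e \in E0 -> ~~ same_class e -> u \in e ->
  adj_by (source_col e) u u' -> flip_col [set u; u'] = p e.
Proof.
move=> eE sc ue uu'; apply/eqP; rewrite (flip_col_eq_p eE sc ue (adj_by_edge uu')) ?set21 //.
by case/andP: uu'.
Qed.

Lemma swap_zone_saturated e : e \in E0 -> ~~ same_class e ->
  color_saturated padj flip_col (swap_zone e) [:: base_col e; p e].
Proof.
move=> eE sc w a /swap_zoneP[x xe xw] a_in.
have [y exy xy] := edge_adj_by (E0_edge eE) xe.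
have ye : y \in e by rewrite exy !inE eqxx orbT.
have in_zone u : u \in e -> u \in swap_zone e by move=> ue; rewrite inE ue.
have nbr_zone u u' : u \in e -> adj_by (source_col e) u u' -> u' \in swap_zone e.
  by move=> ue uu'; rewrite !inE; apply/orP; right; apply/exists_inP; exists u.
have pair_zone u v : u \in swap_zone e -> v \in swap_zone e -> [set u; v] \subset swap_zone e.
  by move=> uz vz; apply/subsetP => z /set2P[-> | ->].
have [-> | ->] : a = base_col e \/ a = p e.
  by move: a_in; rewrite !inE => /orP[] /eqP; [left | right].
- left; case: xw => [-> | xw].
    by exists e; rewrite ?E0_edge //; split; rewrite ?subsetUl ?flip_col_base.
  have blocks : block (base_col e) != block (source_col e) by rewrite eq_sym block_source_col.
  have [y' yy' wy'] := adj_by_square xy xw blocks.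
  exists [set w; y']; first exact: adj_by_edge wy'.
  split; first exact: set21.
    exact: pair_zone _ _ (nbr_zone _ _ xe xw) (nbr_zone _ _ ye yy').
  exact: flip_col_far_edge eE sc exy xw yy' wy'.
case: xw => [-> | xw].
  case: (boolP [exists x', adj_by (source_col e) x x']) => [/existsP[x' xx'] | none].
    left; exists [set x; x']; first exact: adj_by_edge xx'.
    split; [exact: set21 | exact: pair_zone _ _ (in_zone _ xe) (nbr_zone _ _ xe xx') |].
    exact: flip_col_source_edge eE sc xe xx'.
  right => h hE xh; rewrite (flip_col_eq_p eE sc xe hE xh); apply: contra none => /eqP col_h.
  by have [x' _ xx'] := edge_adj_by hE xh; apply/existsP; exists x'; rewrite -col_h.
left; exists [set x; w]; first exact: adj_by_edge xw.
split; [exact: set22 | exact: pair_zone _ _ (in_zone _ xe) (nbr_zone _ _ xe xw) |].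
exact: flip_col_source_edge eE sc xe xw.
Qed.

Definition swap_set e :=
  [set h in edges padj | (h \subset swap_zone e) && (flip_col h \in [:: base_col e; p e])].

Definition swap_owner h := [pick e in E0 | ~~ same_class e && (h \in swap_set e)].

Lemma in_swap_set e h : (h \in swap_set e) =
  [&& h \in edges padj, h \subset swap_zone e & flip_col h \in [:: base_col e; p e]].
Proof. by rewrite /swap_set in_set. Qed.

Lemma swap_set_self e : e \in E0 -> e \in swap_set e.
Proof.
move=> eE; rewrite in_swap_set E0_edge ?subsetUl //=.
case: (boolP (same_class e)) => sc; [rewrite flip_col_same_class | rewrite flip_col_base] => //.
  by rewrite !inE eqxx orbT.
by rewrite !inE eqxx.
Qed.

Lemma swap_set_unique e f h : e \in E0 -> f \in E0 -> h \in swap_set e -> h \in swap_set f -> e = f.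
Proof.
move=> eE fE; rewrite !in_swap_set => /and3P[hE he _] /and3P[_ hf _].
have [x xh] := edge_vertex hE; apply/eqP; apply: contraT => ef.
by have := swap_zone_disjoint eE fE ef (subsetP he x xh); rewrite (subsetP hf x xh).
Qed.

Lemma swap_ownerE e h : e \in E0 -> ~~ same_class e -> h \in swap_set e ->
  swap_owner h = Some e.
Proof.
move=> eE sc he; rewrite /swap_owner; case: pickP => [f /and3P[fE _ hf] | /(_ e)].
  by rewrite (swap_set_unique fE eE hf he).
by rewrite eE sc he.
Qed.

Lemma swap_ownerP h e : swap_owner h = Some e ->
  [/\ e \in E0, ~~ same_class e & h \in swap_set e].
Proof. by rewrite /swap_owner; case: pickP => // f /and3P[fE sc hf] [<-]. Qed.

Lemma swap_owner_adjacent h h' w e : swap_owner h = Some e ->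
  h' \in edges padj -> w \in h -> w \in h' ->
  flip_col h' = swap (base_col e) (p e) (flip_col h) -> swap_owner h' = Some e.
Proof.
case/swap_ownerP => eE sc he h'E wh wh' col_h'; apply: swap_ownerE => //.
move: he; rewrite in_swap_set => /and3P[_ hsub col_h].
have col_in : flip_col h' \in [:: base_col e; p e] by rewrite col_h' swap_mem.
rewrite in_swap_set h'E col_in andbT.
exact: color_saturated_closed (@flip_col_locally_injective) (swap_zone_saturated eE sc)
  (subsetP hsub w wh) h'E wh' col_in.
Qed.

Definition ext_col h :=
  if swap_owner h is Some e then swap (base_col e) (p e) (flip_col h) else flip_col h.

Lemma ext_col_lt h : h \in edges padj -> ext_col h < D.
Proof.
move=> hE; rewrite /ext_col; case oh: swap_owner => [e|]; last exact: flip_col_lt.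
have [eE _ _] := swap_ownerP oh.
by apply: swap_lt; rewrite ?base_col_lt ?E0_edge ?p_lt ?flip_col_lt.
Qed.

Lemma ext_col_E0 e : e \in E0 -> ext_col e = p e.
Proof.
move=> eE; have ee := swap_set_self eE; rewrite /ext_col.
case: (boolP (same_class e)) => sc.
  case oe: (swap_owner e) => [f|]; last exact: flip_col_same_class.
  have [fE scf ef] := swap_ownerP oe.
  by rewrite (swap_set_unique fE eE ef ee) sc in scf.
by rewrite (swap_ownerE eE sc ee) flip_col_base // /swap eqxx.
Qed.

Lemma ext_col_locally_injective : locally_injective padj ext_col.
Proof.
apply: (@recolor_locally_injective _ _ flip_col _
  (fun h => if swap_owner h is Some e then swap (base_col e) (p e) else id)).
- exact: @flip_col_locally_injective.
- by move=> h; case: swap_owner => [e|]; [apply/inv_inj/swapK | apply: inj_id].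
- by move=> h; rewrite /ext_col; case: swap_owner.
move=> h h' w hE h'E wh wh'; rewrite /ext_col.
case oh: (swap_owner h) => [e|]; case oh': (swap_owner h') => [f|] same //.
- have [eE _ he] := swap_ownerP oh; have [fE _ hf] := swap_ownerP oh'.
  have in_zone g x : x \in swap_set g -> w \in x -> w \in swap_zone g.
    by rewrite in_swap_set => /and3P[_ /subsetP sub _] /sub.
  suff -> : e = f by [].
  apply/eqP; apply: contraT => ef.
  by have := swap_zone_disjoint eE fE ef (in_zone _ _ he wh); rewrite (in_zone _ _ hf wh').
- by have := swap_owner_adjacent oh h'E wh wh' (esym same); rewrite oh'.
- by have := swap_owner_adjacent oh' hE wh' wh same; rewrite oh.
Qed.

Lemma precoloring_extendable : exists c : {set vert} -> nat,
  proper_coloring padj (chromatic_index padj) c /\ forall e, e \in E0 -> c e = p e.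
Proof.
exists ext_col; split; last exact: ext_col_E0.
apply/proper_coloringP; split; last exact: @ext_col_locally_injective.
move=> h hE; have [x _] := edge_vertex hE.
exact: leq_trans (ext_col_lt hE) (total_degree_le_chromatic_index x).
Qed.

End Precoloring.
End Pairing.
End CanonicalColoring.
End CartesianProduct.

Theorem theorem2 (k : nat) (V : 'I_k -> finType) (adj : forall i, rel (V i))
  (Hsym : forall i, symmetric (adj i)) (Hirr : forall i, irreflexive (adj i))
  (Hk : 2 <= k)
  (Hclass1 : forall i, class1 (adj i))
  (Heven : ~~ odd (\sum_(i < k) Delta (adj i)))
  (Hlt : forall i, 2 * Delta (adj i) < \sum_(j < k) Delta (adj j))
  (E0 : {set {set prod_vertex V}}) (p : {set prod_vertex V} -> nat)
  (HE0 : E0 \subset edges (prod_adj adj))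
  (Hp : forall e, e \in E0 -> p e < \sum_(i < k) Delta (adj i))
  (Hdist : forall e f, e \in E0 -> f \in E0 -> e != f ->
             edge_dist_ge (prod_adj adj) e f 3) :
  exists c : {set prod_vertex V} -> nat,
    proper_coloring (prod_adj adj) (chromatic_index (prod_adj adj)) c
    /\ forall e, e \in E0 -> c e = p e.
Proof.
have i0 : 'I_k := Ordinal (leq_trans (isT : 0 < 2) Hk).
have /fin_all_exists[cc cc_proper] :
    forall i, exists c : {set V i} -> nat, proper_coloring (adj i) (Delta (adj i)) c.
  by move=> i; apply: class1_coloring.
have D_even : ~~ odd (total_degree adj) by rewrite total_degreeE.
have D_large i : 2 * Delta (adj i) < total_degree adj by rewrite total_degreeE.
have p_lt e : e \in E0 -> p e < total_degree adj by rewrite total_degreeE; apply: Hp.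
exact (precoloring_extendable Hsym Hirr i0 cc_proper D_even D_large HE0 p_lt Hdist).
Qed.
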